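(* For any $\lambda>0$ there exists an exponential set $\mathcal Y$ of positive words over the alphabet $\{a,b\}$ with the following properties: ( * ) If $V$ is a subword of some $W\in\mathcal Y$ and $|V|\ge\lambda|W|$, then $V$ occurs in $W$ as a subword only once; and if this $V$ is also a subword of some $U\in\mathcal Y$, then $U\equiv W$. ( ** ) Every word in $\mathcal Y$ is $7$-aperiodic.
   Context: $|W|$ is the length of a word $W$; $U\equiv V$ means letter-by-letter equality of words. A positive word over $\{a,b\}$ is a word in the letters $a,b$ (no inverse letters). A reduced word is $s$-aperiodic if it contains no subword of the form $Y^s$ with $Y$ a non-empty word. A set $\mathcal Y$ of words is exponential if there exist constants $C$ and $c>1$ such that $\#\{Y\in\mathcal Y:|Y|\le i\}\ge c^i$ for every $i\ge C$. *)

From mathcomp Require Import all_boot.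
From Stdlib Require Import Reals.
Set Implicit Arguments. Unset Strict Implicit. Unset Printing Implicit Defensive.

(* Alphabet {a,b}: a = true, b = false. A positive word is a seq bool. *)
Definition word := seq bool.

Definition subword (V W : word) : bool := infix V W.

Definition occurrences (V W : word) : nat :=
  count (fun i => take (size V) (drop i W) == V) (iota 0 (size W - size V).+1).

Definition wpow (Y : word) (s : nat) : word := flatten (nseq s Y).

Definition aperiodic (s : nat) (W : word) : Prop :=
  forall Y : word, Y <> [::] -> ~~ subword (wpow Y s) W.

Fixpoint all_words (n : nat) : seq word :=
  match n with
  | 0 => [:: [::]]
  | n'.+1 => [seq b :: w | b <- [:: true; false], w <- all_words n']
  end.
Definition words_upto (i : nat) : seq word :=
  flatten [seq all_words n | n <- iota 0 i.+1].

Definition card_upto (S : pred word) (i : nat) : nat := count S (words_upto i).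

Definition exponential (S : pred word) : Prop :=
  exists (C : nat) (c : R), (1 < c)%R /\
    forall i : nat, (C <= i)%N -> (c ^ i <= INR (card_upto S i))%R.

(* A word of the set is the concatenation of 20-letter chunks, each starting with a
   marker 11110 that occurs nowhere else, so any factor of at least 24 letters
   determines the chunk boundaries. The chunks of block [j] (there are [m] blocks of
   [n >= m] chunks) spell a binary word [x] of length [n], flag the first chunk of
   the block, and count [j] in unary; a factor covering two blocks therefore
   determines [n], [x] and its own position, i.e. it occurs once and in one word
   only. Choosing [m] with [lam * m >= 4] makes every factor of length
   [>= lam * |W|] cover two blocks, and the [2 ^ n] words of length [20 m n] make
   the set exponential. A seventh power [Y ^ 7] is excluded by a finite check when
   [|Y| < 4]; otherwise the marker forces [|Y| = 20 k], and the period-doubling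
   sequence, carried by one bit per chunk, has no factor of period [k] and length
   [5 k]. *)

From mathcomp Require Import all_boot.
From Stdlib Require Import Reals Lra.
From mathcomp Require Import ssrnat zify.
Set Implicit Arguments. Unset Strict Implicit. Unset Printing Implicit Defensive.

Lemma size_flatten_uniform (T : Type) (ss : seq (seq T)) (L : nat) :
  all (fun s => size s == L) ss -> size (flatten ss) = size ss * L.
Proof. by elim: ss => [|s ss IH] //= /andP[/eqP Hs /IH]; rewrite size_cat Hs => ->. Qed.

Lemma nth_flatten_uniform (T : Type) (x0 : T) (ss : seq (seq T)) (L i r : nat) :
  all (fun s => size s == L) ss -> r < L -> i < size ss ->
  nth x0 (flatten ss) (i * L + r) = nth x0 (nth [::] ss i) r.
Proof.
elim: ss i => [|s ss IH] [|i] //= /andP[/eqP Hs Hss] Hr Hi.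
  by rewrite nth_cat Hs Hr.
by rewrite nth_cat Hs mulSn -addnA ltnNge leq_addr /= addKn IH.
Qed.

Lemma size_wpow (Y : word) k : size (wpow Y k) = k * size Y.
Proof. by elim: k => //= k IH; rewrite size_cat IH mulSn. Qed.

Lemma nth_wpow (Y : word) k t : t < k * size Y ->
  nth false (wpow Y k) t = nth false Y (t %% size Y).
Proof.
elim: k t => [|k IH] t; first by rewrite mul0n.
rewrite /wpow /= nth_cat mulSn => Ht.
case: (ltnP t (size Y)) => Hl; first by rewrite modn_small.
by rewrite -/(wpow Y k) IH ?ltn_subLR // -{2}(subnK Hl) modnDr.
Qed.

Lemma occurs_atP (T : eqType) (x0 : T) (V W : seq T) i : i + size V <= size W ->
  reflect (forall t, t < size V -> nth x0 W (i + t) = nth x0 V t)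
          (take (size V) (drop i W) == V).
Proof.
move=> HiW; apply: (iffP eqP) => [HV t Ht | HV].
  by rewrite -HV nth_take ?nth_drop.
apply: (@eq_from_nth _ x0) => [|t]; rewrite size_take size_drop; first by case: ifP; lia.
by move=> Ht; rewrite nth_take ?nth_drop ?HV //; move: Ht; case: ifP; lia.
Qed.

Lemma infix_occurs_at (T : eqType) (V W : seq T) : infix V W ->
  exists2 s, s + size V <= size W & take (size V) (drop s W) == V.
Proof.
case/infixP => [u [u' ->]]; exists (size u); first by rewrite !size_cat addnA leq_addr.
by rewrite drop_size_cat // take_size_cat.
Qed.

Lemma occurrences_unique (V W : word) s :
  s + size V <= size W ->
  (forall i, i + size V <= size W -> (take (size V) (drop i W) == V) = (i == s)) ->
  occurrences V W = 1.
Proof.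
move=> Hs Hocc; rewrite /occurrences (@eq_in_count _ _ (pred1 s)).
  by rewrite count_uniq_mem ?iota_uniq // mem_iota add0n (_ : s < _ = true) //; lia.
by move=> i; rewrite mem_iota ltnS => Hi; apply: Hocc; lia.
Qed.

Lemma wpow_periodic (Y W : word) k : infix (wpow Y k.+1) W ->
  exists2 s, s + k.+1 * size Y <= size W &
    forall t, t < k * size Y -> nth false W (s + t) = nth false W (s + t + size Y).
Proof.
case/infix_occurs_at => s Hs /(occurs_atP false Hs) Hnth.
rewrite size_wpow in Hs Hnth; exists s => // t Ht.
rewrite -addnA !Hnth ?nth_wpow ?size_wpow ?modnDr //; lia.
Qed.

Definition marker : word := [:: true; true; true; true; false].

(* Every field bit [b] is written as [b (~~ b) false], so no four consecutive
   [true]s occur outside the marker. *)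
Definition chunk (f d h e : bool) : word :=
  marker ++ [:: f; ~~ f; false; d; ~~ d; false; h; ~~ h; false; e; ~~ e; false;
                false; true; false].

Definition period_doubling (i : nat) : bool := odd (logn 2 i.+1).

(* Chunk number [i = j * n + r] carries the letter [x_r], the unary counter
   [r < j] locating the block [j], and the flag [r = 0] of block boundaries. *)
Definition block (n : nat) (x : word) (i : nat) : word :=
  chunk (period_doubling i) (nth false x (i %% n)) (i %% n < i %/ n) (i %% n == 0).

Definition code (m n : nat) (x : word) : word :=
  flatten [seq block n x i | i <- iota 0 (m * n)].

Lemma block_pair_marker n x i (w := block n x i ++ block n x i.+1) :
  all (fun r => has (fun j => nth false w (r + j) != nth false marker j) (iota 0 5))
      (iota 1 19).
Proof.
rewrite {}/w /block; move: (period_doubling i) (period_doubling i.+1).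
move: (nth false x _) (nth false x _) (_ < _) (_ < _) (_ == _) (_ == _).
by do 8 case; vm_compute.
Qed.

Lemma block_pair_short_periods n x i (w := block n x i ++ block n x i.+1) :
  all (fun r => all (fun p =>
         has (fun t => nth false w (r + t) != nth false w (r + t + p)) (iota 0 (6 * p)))
       [:: 1; 2; 3])
      (iota 0 20).
Proof.
rewrite {}/w /block; move: (period_doubling i) (period_doubling i.+1).
move: (nth false x _) (nth false x _) (_ < _) (_ < _) (_ == _) (_ == _).
by do 8 case; vm_compute.
Qed.

Lemma size_block n x i : size (block n x i) = 20. Proof. by []. Qed.

Lemma nth_block_marker n x i r : r < 5 -> nth false (block n x i) r = nth false marker r.
Proof. by case: r => [|[|[|[|[|]]]]]. Qed.

Lemma nth_block_period_doubling n x i : nth false (block n x i) 5 = period_doubling i.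
Proof. by []. Qed.

Lemma nth_block_letter n x i : nth false (block n x i) 8 = nth false x (i %% n).
Proof. by []. Qed.

Lemma nth_block_counter n x i : nth false (block n x i) 11 = (i %% n < i %/ n).
Proof. by []. Qed.

Lemma nth_block_boundary n x i : nth false (block n x i) 14 = (i %% n == 0).
Proof. by []. Qed.

Lemma all_size_block n x (s : seq nat) :
  all (fun c => size c == 20) [seq block n x i | i <- s].
Proof. by apply/allP => c /mapP[i _ ->]. Qed.

Lemma size_code m n x : size (code m n x) = m * n * 20.
Proof. by rewrite (size_flatten_uniform (all_size_block _ _ _)) size_map size_iota. Qed.

Lemma nth_code m n x i r : i < m * n -> r < 20 ->
  nth false (code m n x) (i * 20 + r) = nth false (block n x i) r.
Proof.
move=> Hi Hr; rewrite nth_flatten_uniform ?all_size_block ?size_map ?size_iota //.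
by rewrite (nth_map 0) ?size_iota // nth_iota.
Qed.

Lemma nth_code_pair m n x i r : i * 20 + r < size (code m n x) -> r < 40 ->
  nth false (code m n x) (i * 20 + r) = nth false (block n x i ++ block n x i.+1) r.
Proof.
rewrite size_code nth_cat size_block => Hs Hr; case: ltnP => Hr20.
  by rewrite nth_code //; lia.
have -> : i * 20 + r = i.+1 * 20 + (r - 20) by lia.
by rewrite nth_code //; lia.
Qed.

Lemma code_marker_aligned m n x q : q + 5 <= size (code m n x) ->
  (forall r, r < 5 -> nth false (code m n x) (q + r) = nth false marker r) ->
  q %% 20 = 0.
Proof.
move=> Hq Hmarker; have Eq := divn_eq q 20.
set i := q %/ 20 in Eq; set rho := q %% 20 in Eq *.
case: (posnP rho) => // rho_gt0.
have rho_in : rho \in iota 1 19 by rewrite mem_iota rho_gt0 ltn_mod.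
have /allP/(_ rho rho_in)/hasP[j] := block_pair_marker n x i.
rewrite mem_iota add0n => Hj; rewrite -Hmarker // Eq -addnA nth_code_pair ?eqxx //; lia.
Qed.

Lemma code_no_short_period m n x s p : 0 < p < 4 -> s + 7 * p <= size (code m n x) ->
  ~ (forall t, t < 6 * p ->
       nth false (code m n x) (s + t) = nth false (code m n x) (s + t + p)).
Proof.
move=> Hp Hs Hper; have Es := divn_eq s 20.
set i := s %/ 20 in Es; set rho := s %% 20 in Es.
have rho_lt20 : rho < 20 by rewrite ltn_mod.
have rho_in : rho \in iota 0 20 by rewrite mem_iota.
have p_in : p \in [:: 1; 2; 3] by rewrite !inE; lia.
have /allP/(_ rho rho_in)/allP/(_ p p_in)/hasP[t] := block_pair_short_periods n x i.
rewrite mem_iota add0n => /andP[_ Ht]; apply/negP; rewrite negbK.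
rewrite -!(@nth_code_pair m n x) ?addnA -?Es ?Hper //; lia.
Qed.

Lemma logn2_odd_mul c e : odd c -> logn 2 (c * 2 ^ e) = e.
Proof. by move=> Hc; rewrite logn_Gauss ?coprime2n // pfactorK. Qed.

(* Write [k = o * 2 ^ e] with [o] odd. The window contains an odd multiple [j] of
   [2 ^ e.+1]; then [j + k] is an odd multiple of [2 ^ e], so the 2-adic
   valuations of [j] and [j + k] have different parities. *)
Lemma period_doubling_aperiodic a k : 0 < k ->
  exists2 t, t < 4 * k & period_doubling (a + t) != period_doubling (a + t + k).
Proof.
move=> Hk; have [o o_odd Ek] := pfactor_coprime (isT : prime 2) Hk.
rewrite coprime2n in o_odd; set e := logn 2 k in Ek.
have pow_le_k : 2 ^ e <= k by rewrite Ek leq_pmull //; case: o o_odd {Ek}.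
suff [c c_odd Hc] : exists2 c, odd c & a.+1 <= c * 2 ^ e.+1 < a.+1 + 4 * k.
  exists (c * 2 ^ e.+1 - a.+1); first by lia.
  rewrite /period_doubling (_ : (a + (_ - _)).+1 = c * 2 ^ e.+1); last by lia.
  rewrite (_ : (a + _ + k).+1 = (o + 2 * c) * 2 ^ e); last first.
    by move: Hc; rewrite expnS; lia.
  by rewrite !logn2_odd_mul ?oddD ?oddM ?o_odd ?c_odd //=; case: (odd e).
have Ea := divn_eq a.+1 (4 * 2 ^ e).
have Hr : a.+1 %% (4 * 2 ^ e) < 4 * 2 ^ e by rewrite ltn_mod muln_gt0 expn_gt0.
case: (leqP (a.+1 %% (4 * 2 ^ e)) (2 * 2 ^ e)) => Hr2.
  exists (2 * (a.+1 %/ (4 * 2 ^ e)) + 1); first by rewrite oddD oddM.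
  by rewrite expnS; lia.
exists (2 * (a.+1 %/ (4 * 2 ^ e)) + 3); first by rewrite oddD oddM.
by rewrite expnS; lia.
Qed.

Lemma code_window_aligned m n x m' n' x' s s' l T :
  s + l <= size (code m n x) -> s' + l <= size (code m' n' x') -> 20 * T + 24 <= l ->
  (forall t, t < l ->
     nth false (code m n x) (s + t) = nth false (code m' n' x') (s' + t)) ->
  exists a a', [/\ s' + a * 20 = s + a' * 20, a + T <= m * n, a' + T <= m' * n' &
                   forall t, t < T -> block n x (a + t) = block n' x' (a' + t)].
Proof.
move=> Hs Hs' Hl Heq; set a := (s + 19) %/ 20.
have Ea : s <= a * 20 <= s + 19.
  have := divn_eq (s + 19) 20; have : (s + 19) %% 20 < 20 by rewrite ltn_mod.
  by rewrite -/a; lia.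
have Hsize := size_code m n x; have Hsize' := size_code m' n' x'.
have /code_marker_aligned marker_at :
  s' + (a * 20 - s) + 5 <= size (code m' n' x') by lia.
have Hq : (s' + (a * 20 - s)) %% 20 = 0.
  apply: marker_at => r Hr; rewrite -addnA -Heq; last by lia.
  by rewrite (_ : s + _ = a * 20 + r) ?nth_code ?nth_block_marker //; lia.
exists a, ((s' + (a * 20 - s)) %/ 20).
have := divn_eq (s' + (a * 20 - s)) 20; rewrite Hq addn0 => Ea'.
split; try lia.
move=> t Ht; apply: (@eq_from_nth _ false) => [|r]; rewrite size_block // => Hr.
rewrite -(@nth_code m n x) -?(@nth_code m' n' x'); try lia.
rewrite (_ : _ * 20 + r = s + ((a + t) * 20 + r - s)); last by lia.
by rewrite Heq; [congr nth | ]; lia.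
Qed.

Lemma code_aperiodic m n x : aperiodic 7 (code m n x).
Proof.
move=> Y Y_neq0; apply/negP => /wpow_periodic[s Hs Hper].
have p_gt0 : 0 < size Y by rewrite lt0n size_eq0; apply/eqP.
have [p_lt4 | p_ge4] := ltnP (size Y) 4.
  by apply: (@code_no_short_period m n x s (size Y)) => //; rewrite p_gt0.
have shifted t : t < 6 * size Y -> nth false (code m n x) (s + t) =
                                   nth false (code m n x) (s + size Y + t).
  by move=> Ht; rewrite addnAC; apply: Hper.
have Hw : s + 6 * size Y <= size (code m n x) by lia.
have Hw' : s + size Y + 6 * size Y <= size (code m n x) by lia.
(* The markers force [size Y = 20 * (a' - a)]; a shift by [a' - a] blocks is then
   excluded by the period-doubling bits. *)
have long0 : 20 * 0 + 24 <= 6 * size Y by lia.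
have [a [a' [Ea _ _ _]]] := code_window_aligned Hw Hw' long0 shifted.
have long : 20 * (4 * (a' - a)) + 24 <= 6 * size Y by lia.
have [b [b' [Eb _ _ Hblock]]] := code_window_aligned Hw Hw' long shifted.
have k_gt0 : 0 < a' - a by lia.
have [t Ht] := period_doubling_aperiodic b k_gt0.
apply/negP; rewrite negbK -!(nth_block_period_doubling n x) Hblock //.
by rewrite (_ : b + t + _ = b' + t) //; lia.
Qed.

Lemma exists_shift_to_multiple a n : 0 < n -> exists2 t, t < n & n %| a + t.
Proof.
move=> n_gt0; exists ((n - a %% n) %% n); first by rewrite ltn_mod.
rewrite /dvdn modnDmr {1}(divn_eq a n) -addnA subnKC ?modnMDl ?modnn //.
by rewrite ltnW // ltn_mod.
Qed.

Lemma eq_modulus_of_dvdn n n' : 0 < n -> 0 < n' ->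
  (forall r, r <= n -> (n' %| r) = (n %| r)) -> n' = n.
Proof.
move=> n_gt0 n'_gt0 Hdvd; have n'_dvd_n : n' %| n by rewrite Hdvd ?dvdnn.
apply/eqP; rewrite eqn_dvd n'_dvd_n -Hdvd ?dvdnn //.
exact: dvdn_leq.
Qed.

Lemma unary_counter_inj n j j' : j < n -> j' < n ->
  (forall r, r < n -> (r < j) = (r < j')) -> j = j'.
Proof.
move=> Hj Hj' Hcount; apply/eqP.
by rewrite eqn_leq leqNgt (Hcount j' Hj') ltnn leqNgt -(Hcount j Hj) ltnn.
Qed.

Lemma block_boundaries_period n x n' x' a a' : 0 < n -> 0 < n' ->
  (forall t, t < 2 * n -> block n x (a + t) = block n' x' (a' + t)) -> n' = n.
Proof.
move=> n_gt0 n'_gt0 Hblock.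
have boundary t : t < 2 * n -> (n %| a + t) = (n' %| a' + t).
  move=> Ht; rewrite /dvdn -(nth_block_boundary n x) -(nth_block_boundary n' x').
  by rewrite Hblock.
have [t0 t0_lt Ht0] := exists_shift_to_multiple a n_gt0.
have Ht0' : n' %| a' + t0 by rewrite -boundary ?Ht0 //; lia.
apply: eq_modulus_of_dvdn => // r Hr.
by rewrite -(dvdn_addr r Ht0') -(dvdn_addr r Ht0) -!addnA boundary //; lia.
Qed.

Lemma code_blocks_unique m n x n' x' a a' :
  m <= n -> size x = n -> size x' = n' -> 0 < n ->
  a + 2 * n <= m * n -> a' + 2 * n <= m * n' ->
  (forall t, t < 2 * n -> block n x (a + t) = block n' x' (a' + t)) ->
  [/\ n = n', x = x' & a = a'].
Proof.
move=> Hmn Hx Hx' n_gt0 Ha Ha' Hblock.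
have n'_gt0 : 0 < n' by rewrite lt0n; apply: contraTneq Ha' => ->; rewrite muln0; lia.
have En := block_boundaries_period n_gt0 n'_gt0 Hblock.
rewrite {n'_gt0}En in Hx' Ha' Hblock *.
have [t0 t0_lt Ht0] := exists_shift_to_multiple a n_gt0.
have Ht0' : n %| a' + t0.
  by rewrite /dvdn -(nth_block_boundary n x') -Hblock ?nth_block_boundary //; lia.
have mod_in_block b r : n %| b -> r < n -> (b + r) %% n = r.
  by move=> /dvdnP[q ->] Hr; rewrite modnMDl modn_small.
have div_in_block b r : n %| b -> r < n -> (b + r) %/ n = b %/ n.
  by move=> /dvdnP[q ->] Hr; rewrite divnMDl // divn_small // addn0 mulnK.
have fields r : r < n ->
    nth false (block n x (a + t0 + r)) =1 nth false (block n x' (a' + t0 + r)).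
  by move=> Hr i; rewrite -!addnA Hblock //; lia.
have Exx' : x = x'.
  apply: (@eq_from_nth _ false) => [|r]; first by rewrite Hx Hx'.
  rewrite Hx => Hr; move: (fields r Hr 8).
  by rewrite !nth_block_letter !mod_in_block.
subst x'; split => //.
have Ej : (a + t0) %/ n = (a' + t0) %/ n.
  have j_lt : (a + t0) %/ n < n by rewrite (leq_trans _ Hmn) // ltn_divLR //; lia.
  have j'_lt : (a' + t0) %/ n < n by rewrite (leq_trans _ Hmn) // ltn_divLR //; lia.
  apply: (unary_counter_inj j_lt j'_lt) => r Hr; move: (fields r Hr 11).
  rewrite !nth_block_counter !mod_in_block //.
  by rewrite (div_in_block (a + t0)) // (div_in_block (a' + t0)) // => ->.
by apply: (@addIn t0); rewrite -(divnK Ht0) -(divnK Ht0') Ej.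
Qed.

Lemma code_window_unique m n x n' x' s s' l :
  m <= n -> size x = n -> size x' = n' ->
  s + l <= size (code m n x) -> s' + l <= size (code m n' x') -> 40 * n + 24 <= l ->
  (forall t, t < l ->
     nth false (code m n x) (s + t) = nth false (code m n' x') (s' + t)) ->
  [/\ n = n', x = x' & s = s'].
Proof.
move=> Hmn Hx Hx' Hs Hs' Hl Hwin.
have n_gt0 : 0 < n.
  by rewrite lt0n; apply: contraTneq Hs => n0; rewrite size_code n0 muln0; lia.
have long : 20 * (2 * n) + 24 <= l by lia.
have [a [a' [Es Ha Ha' Hblock]]] := code_window_aligned Hs Hs' long Hwin.
have [<- <- Eaa'] := code_blocks_unique Hmn Hx Hx' n_gt0 Ha Ha' Hblock.
by split => //; lia.
Qed.

Definition decode (n : nat) (W : word) : word :=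
  [seq nth false W (i * 20 + 8) | i <- iota 0 n].

Lemma decode_code m n x : 0 < m -> size x = n -> decode n (code m n x) = x.
Proof.
move=> m_gt0 Hx; apply: (@eq_from_nth _ false) => [|i]; rewrite size_map size_iota //.
move=> Hi; rewrite (nth_map 0) ?size_iota // nth_iota // add0n nth_code //.
  by rewrite nth_block_letter modn_small // Hx.
by apply: leq_trans Hi _; rewrite leq_pmull.
Qed.

Definition is_code (m : nat) : pred word := fun W =>
  let n := size W %/ (m * 20) in (m <= n) && (W == code m n (decode n W)).

Lemma is_codeP m W : is_code m W ->
  exists n x, [/\ m <= n, size x = n & W = code m n x].
Proof.
case/andP => Hmn /eqP EW; set n := size W %/ (m * 20) in Hmn EW.
by exists n, (decode n W); rewrite size_map size_iota.
Qed.

Lemma code_is_code m n x : 0 < m -> m <= n -> size x = n -> is_code m (code m n x).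
Proof.
move=> m_gt0 Hmn Hx; rewrite /is_code size_code.
rewrite (_ : m * n * 20 %/ (m * 20) = n); last by rewrite mulnAC mulKn // muln_gt0 m_gt0.
by rewrite Hmn decode_code // eqxx.
Qed.

Lemma all_wordsS n :
  all_words n.+1 = [seq b :: w | b <- [:: true; false], w <- all_words n].
Proof. by []. Qed.

Lemma mem_all_words n w : (w \in all_words n) = (size w == n).
Proof.
elim: n w => [|n IH] w; first by rewrite inE size_eq0.
rewrite all_wordsS; apply/allpairsP/idP => [[[b w'] [_ Hw' ->]] | ].
  by rewrite /= eqSS -IH.
by case: w => [|b w] //= Hw; exists (b, w); rewrite IH; split => //; case: b.
Qed.

Lemma all_words_uniq n : uniq (all_words n).
Proof.
elim: n => // n IH; rewrite all_wordsS.
by apply: allpairs_uniq => // [[b w] [b' w']] _ _ [-> ->].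
Qed.

Lemma size_all_words n : size (all_words n) = 2 ^ n.
Proof. by elim: n => // n IH; rewrite all_wordsS size_allpairs IH expnS. Qed.

Lemma count_all_words_le_card_upto (S : pred word) N i : N <= i ->
  count S (all_words N) <= card_upto S i.
Proof.
move=> HN; rewrite /card_upto /words_upto.
have : N \in iota 0 i.+1 by rewrite mem_iota ltnS.
elim: (iota 0 i.+1) => //= j js IH; rewrite inE count_cat => /orP[/eqP <-|/IH].
  exact: leq_addr.
by move/leq_trans; apply; rewrite leq_addl.
Qed.

Lemma count_is_code m n : 0 < m -> m <= n ->
  2 ^ n <= count (is_code m) (all_words (m * 20 * n)).
Proof.
move=> m_gt0 Hmn; rewrite -size_all_words -(size_map (code m n)) -size_filter.
apply: uniq_leq_size => [|_ /mapP[x Hx ->]].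
  rewrite map_inj_in_uniq ?all_words_uniq // => x y; rewrite !mem_all_words.
  by move=> /eqP Hx /eqP Hy E; rewrite -(decode_code m_gt0 Hx) E decode_code.
move: Hx; rewrite mem_filter !mem_all_words size_code => /eqP Hx.
by rewrite code_is_code //= mulnAC.
Qed.

Lemma INR_expn (b n : nat) : INR (b ^ n) = (INR b ^ n)%R.
Proof. by elim: n => [|n IH] //; rewrite expnS mult_INR IH. Qed.

Lemma Rpower_inv_pow (K n : nat) : (0 < K)%N ->
  (Rpower 2 (/ INR K) ^ (K * n) = 2 ^ n)%R.
Proof.
move=> K_gt0; have K_pos : (0 < INR K)%R by apply/lt_0_INR/ltP.
rewrite pow_mult -(Rpower_pow K); last exact: exp_pos.
by rewrite Rpower_mult Rinv_l ?Rpower_1 //; lra.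
Qed.

Lemma exponential_of_all_words (S : pred word) K m : 0 < K ->
  (forall n, m <= n -> 2 ^ n <= count S (all_words (K * n))) -> exponential S.
Proof.
move=> K_gt0 Hcount; pose c := Rpower 2 (/ INR (2 * K)).
have c_ge1 : (1 <= c)%R.
  rewrite -(Rpower_O 2); last by lra.
  by apply: Rle_Rpower; [lra | apply/Rlt_le/Rinv_0_lt_compat/lt_0_INR/ltP; lia].
exists (K * m.+1), c; split.
  rewrite -(Rpower_O 2); last by lra.
  by apply: Rpower_lt; [lra | apply/Rinv_0_lt_compat/lt_0_INR/ltP; lia].
move=> i Hi; set n := i %/ K.
have Hn : m < n by rewrite /n leq_divRL // mulnC.
have Hi2 : i <= 2 * K * n.
  by have := divn_eq i K; have := ltn_mod i K; rewrite K_gt0; nia.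
apply: (Rle_trans _ (c ^ (2 * K * n))); first by apply: Rle_pow => //; apply/leP.
rewrite Rpower_inv_pow; last by lia.
rewrite (_ : 2%R = INR 2) // -INR_expn; apply/le_INR/leP.
apply: leq_trans (Hcount n (ltnW Hn)) _; apply: count_all_words_le_card_upto.
by rewrite mulnC leq_divM.
Qed.

Lemma exists_nat_mul_ge (lam c : R) : (0 < lam)%R ->
  exists2 m, 0 < m & (c <= lam * INR m)%R.
Proof.
move=> lam_gt0; have [m Hm] := INR_unbounded (c / lam); exists m.+1 => //.
rewrite S_INR; have -> : c = (lam * (c / lam))%R by field; lra.
by apply: Rmult_le_compat_l; lra.
Qed.

Lemma long_factor_size (lam : R) m n l : (4 <= lam * INR m)%R ->
  (lam * INR (m * n * 20) <= INR l)%R -> 80 * n <= l.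
Proof.
move=> Hm Hl; apply/leP/INR_le; apply: Rle_trans Hl.
rewrite !mult_INR (INR_IZR_INZ 80) (INR_IZR_INZ 20) /=.
have := pos_INR n; nra.
Qed.

Theorem lemma1 (lam : R) (hlam : (0 < lam)%R) :
  exists S : pred word,
    exponential S /\
    (forall W V : word, S W -> subword V W ->
       (lam * INR (size W) <= INR (size V))%R ->
       occurrences V W = 1%N /\
       (forall U : word, S U -> subword V U -> U = W)) /\
    (forall W : word, S W -> aperiodic 7 W).
Proof.
have [m m_gt0 Hm] := exists_nat_mul_ge 4 hlam.
exists (is_code m); split.
  apply: (exponential_of_all_words (K := m * 20) (m := m)) => [|n]; first by lia.
  exact: count_is_code.
split; last by move=> W /is_codeP[n [x [_ _ ->]]]; apply: code_aperiodic.
move=> W V /is_codeP[n [x [Hmn Hx ->]]] /infix_occurs_at[s Hs Hocc].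
have HsV := elimT (occurs_atP false Hs) Hocc.
rewrite size_code => /(long_factor_size Hm) HV.
have long : 40 * n + 24 <= size V by lia.
have unique n' x' i : size x' = n' -> i + size V <= size (code m n' x') ->
    take (size V) (drop i (code m n' x')) == V -> [/\ n = n', x = x' & s = i].
  move=> Hx' Hi /(elimT (occurs_atP false Hi)) HiV.
  by apply: code_window_unique Hmn Hx Hx' Hs Hi long _ => t Ht; rewrite HsV // HiV.
split.
  apply: occurrences_unique Hs _ => i Hi; apply/idP/eqP => [HiV | ->].
    by have [_ _ ->] := unique n x i Hx Hi HiV.
  exact: Hocc.
move=> U /is_codeP[n' [x' [_ Hx' ->]]] /infix_occurs_at[i Hi HiV].
by have [<- <- _] := unique n' x' i Hx' Hi HiV.
Qed.
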